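(* Let $p\geq 2$ be an even integer and let $U_p=\bigcup_{n\in 2\mathbb Z_+}\mathbb Z_p^n$. Let $\tau\in\{1,\ldots,p\}$ be such that $\tau\equiv 0\pmod 2$, $\tau\mid p$ and $p/\tau\equiv 0\pmod 2$. Let $\boldsymbol a,\boldsymbol b\in U_p$ be equivalent (in the sense defined in the context). Then $\mu_{p,\tau}(\boldsymbol a)=\mu_{p,\tau}(\boldsymbol b)$.
   Context: $\mathbb Z_+$ denotes the positive integers and $\mathbb Z_p=\mathbb Z/p\mathbb Z$. Two elements of $U_p$ are called equivalent if they are related by a finite sequence of the following transformations of $(a_1,\ldots,a_n)\in\mathbb Z_p^n$ ($n$ even): (Op1) $(a_1,\ldots,a_n)\to(a_2,\ldots,a_n,a_1)$; (Op2) $(a_1,\ldots,a_n)\to(a, a_2+(-1)^2(a_1-a),\ldots,a_i+(-1)^i(a_1-a),\ldots,a_n+(-1)^n(a_1-a))$ for any $a\in\mathbb Z_p$; (Op3) $(a_1,\ldots,a_n)\to(a, a_1-a_2+a,\ldots,a_1-a_i+a,\ldots,a_1-a_n+a)$ for any $a\in\mathbb Z_p$; (Op4) $(a_1,\ldots,a_n)\to(a_1,-a_1+a_2+a_3,a_3,\ldots,a_n)$ when $n>3$. For $\boldsymbol a=(a_1,\ldots,a_n)\in U_p$, $\tau_p(\boldsymbol a)$ is the maximum of all $k\in\{1,\ldots,p\}$ with $k\mid p$ and $a_1+a_2\equiv a_2+a_3\equiv\cdots\equiv a_n+a_1\pmod k$. For an even integer $q\ge 2$ and a tuple $(b_1,\ldots,b_m)$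 of elements of $\mathbb Z_q$, let $E$ (resp. $O$) count the number of entries that are even (resp. odd), and define $\mu_q(b_1,\ldots,b_m)=E(b_1+b_2,\ldots,b_{m-1}+b_m,b_m+b_1)-O(b_1+b_2,\ldots,b_{m-1}+b_m,b_m+b_1)$. Define $\mu_{p,\tau}:U_p\to\mathbb Z\cup\{\infty\}$ as follows. If $\tau_p(\boldsymbol a)\neq\tau$, then $\mu_{p,\tau}(\boldsymbol a)=\infty$. If $\tau_p(\boldsymbol a)=\tau$, then $a_{2j-1}-a_1$ and $a_{2j}-a_2$ are divisible by $\tau$ in $\mathbb Z_p$ for all $j$, and dividing by $\tau$ gives well-defined elements of $\mathbb Z_{p/\tau}$; set $\mu_{p,\tau}(\boldsymbol a)=\left|\mu_{p/\tau}\left(\frac{a_1-a_1}{\tau},\frac{a_2-a_2}{\tau},\frac{a_3-a_1}{\tau},\frac{a_4-a_2}{\tau},\ldots,\frac{a_{2j-1}-a_1}{\tau},\frac{a_{2j}-a_2}{\tau},\ldots,\frac{a_{n-1}-a_1}{\tau},\frac{a_n-a_2}{\tau}\right)\right|$, i.e. odd-indexed entries have $a_1$ subtracted and even-indexed entries have $a_2$ subtracted. *)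

From HB Require Import structures.
From mathcomp Require Import all_boot all_order all_algebra.
From Stdlib Require Import Relations.
Set Implicit Arguments. Unset Strict Implicit. Unset Printing Implicit Defensive.
Import GRing.Theory.
Local Open Scope ring_scope.

Definition inU (p : nat) (s : seq 'Z_p) : bool :=
  (0 < size s)%N && ~~ odd (size s).

Definition csums (q : nat) (s : seq 'Z_q) : seq 'Z_q :=
  [seq x.1 + x.2 | x <- zip s (rot 1 s)].

Definition op1 (p : nat) (s : seq 'Z_p) : seq 'Z_p := rot 1 s.
(* Op2: a_i -> a_i + (-1)^i (a_1 - a)  (1-based i; index i is 0-based here) *)
Definition op2 (p : nat) (a : 'Z_p) (s : seq 'Z_p) : seq 'Z_p :=
  [seq s`_i + (-1) ^+ i.+1 * (s`_0 - a) | i <- iota 0 (size s)].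
Definition op3 (p : nat) (a : 'Z_p) (s : seq 'Z_p) : seq 'Z_p :=
  [seq s`_0 - s`_i + a | i <- iota 0 (size s)].
Definition op4 (p : nat) (s : seq 'Z_p) : seq 'Z_p :=
  set_nth 0 s 1 (- s`_0 + s`_1 + s`_2).

Definition step (p : nat) (s t : seq 'Z_p) : Prop :=
  inU s /\
  [\/ t = op1 s,
      exists a, t = op2 a s,
      exists a, t = op3 a s
    | (3 < size s)%N /\ t = op4 s].

Definition equivalent (p : nat) (s t : seq 'Z_p) : Prop :=
  inU s /\ inU t /\ clos_refl_sym_trans _ (@step p) s t.

(* congruence mod k of two elements of Z_p (well defined when k | p) *)
Definition congr_mod (p : nat) (k : nat) (x y : 'Z_p) : bool :=
  (val x == val y %[mod k])%N.

Definition tau_p (p : nat) (s : seq 'Z_p) : nat :=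
  \max_(k < p.+1 | [&& (0 < k)%N, (k %| p)%N &
                     all (fun x => congr_mod k x (csums s)`_0) (csums s)]) k.

(* mu_q(b) = E - O, counting even/odd entries of the consecutive sums;
   parity of an element of Z_q (q even) is that of its representative. *)
Definition mu_q (q : nat) (s : seq 'Z_q) : int :=
  (count (fun x : 'Z_q => ~~ odd (val x)) (csums s))%:Z
  - (count (fun x : 'Z_q => odd (val x)) (csums s))%:Z.

(* division by tau: Z_p -> Z_{p/tau}, for elements divisible by tau *)
Definition divtau (p tau : nat) (x : 'Z_p) : 'Z_(p %/ tau) :=
  inZp (val x %/ tau).

Definition reduce (p tau : nat) (s : seq 'Z_p) : seq 'Z_(p %/ tau) :=
  [seq divtau tau (s`_i - (if odd i then s`_1 else s`_0)) | i <- iota 0 (size s)].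

(* mu_{p,tau} : U_p -> Z u {oo}; None stands for infinity *)
Definition mu_ptau (p tau : nat) (s : seq 'Z_p) : option nat :=
  if tau_p s == tau then Some `|mu_q (reduce tau s)|%N else None.

From mathcomp Require Import all_boot all_order all_algebra.
From mathcomp Require Import ring zify.
Set Implicit Arguments. Unset Strict Implicit. Unset Printing Implicit Defensive.
Import GRing.Theory.
Local Open Scope ring_scope.

(* Write c = csums a for the cyclic sequence of consecutive sums.  Op1 rotates
   c, Op2 fixes it, Op3 maps it to K - c for a constant K, and Op4 turns
   (c1, c2, c3, ...) into (c2, 2 c2 - c1, c3, ...).  Both tau_p(a) and
   mu_{p,tau}(a) only depend on the multiset of differences c_i - r to any
   reference r in c, each taken up to sign.  For tau_p this is the
   divisibility of the differences.  For mu, the consecutive sums of the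
   reduced sequence are the quotients (c_i - c1)/tau, so mu is the balance of
   their parities, which are additive because p/tau is even; changing the
   reference flips all parities at once and leaves |mu| unchanged.  Relative
   to r = c2, Op4 merely swaps c1 - c2 and -(c1 - c2) with the zero
   difference. *)

Lemma nth_rot1 (T : Type) (x0 : T) (s : seq T) i : (i < size s)%N ->
  nth x0 (rot 1 s) i = nth x0 s (i.+1 %% size s).
Proof.
case: s => [//|x t] /= lt_i_t; rewrite rot1_cons nth_rcons.
case: ltnP => [lt_i1_t|le_t_i1]; first by rewrite modn_small.
have -> : i = size t by lia.
by rewrite eqxx modnn.
Qed.

Lemma bigmax_attained (I : finType) (P : pred I) (F : I -> nat) m :
  (\max_(i | P i) F i)%N = m -> (0 < m)%N -> exists2 i, P i & F i = m.
Proof.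
move=> <- max_gt0; case: (pickP P) => [i0 Pi0 | P0]; last first.
  by rewrite big_pred0 in max_gt0.
rewrite (bigmax_eq_arg i0 Pi0); case: arg_maxnP => // i Pi _; by exists i.
Qed.

Definition balance (bs : seq bool) : int := (count negb bs)%:Z - (count id bs)%:Z.

Lemma balance_perm bs bs' : perm_eq bs bs' -> balance bs = balance bs'.
Proof. by move/permP => eq_count; rewrite /balance !eq_count. Qed.

Lemma absz_balance_addb b bs : `|balance [seq c (+) b | c <- bs]|%N = `|balance bs|%N.
Proof.
case: b; last by rewrite (@eq_map _ _ _ id) ?map_id // => c; rewrite addbF.
rewrite (@eq_map _ _ _ negb) => [|c]; last by rewrite addbT.
rewrite /balance !count_map (@eq_count _ (preim negb negb) id) => [|c] /=.
  by rewrite -opprB abszN.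
by rewrite negbK.
Qed.

Lemma mu_q_balance q (s : seq 'Z_q) :
  mu_q s = balance [seq odd (val x) | x <- csums s].
Proof. by rewrite /mu_q /balance !count_map. Qed.

Section ConsecutiveSums.

Variable p : nat.
Implicit Types (s : seq 'Z_p) (a : 'Z_p).

Lemma size_csums s : size (csums s) = size s.
Proof. by rewrite /csums size_map size_zip size_rot minnn. Qed.

Lemma nth_csums s i : (i < size s)%N ->
  (csums s)`_i = s`_i + s`_(i.+1 %% size s).
Proof.
move=> lt_i_s; rewrite /csums (nth_map 0) ?size_zip ?size_rot ?minnn //.
by rewrite nth_zip ?size_rot //= nth_rot1.
Qed.

Lemma csums_op1 s : csums (op1 s) = rot 1 (csums s).
Proof.
apply: (@eq_from_nth _ 0); first by rewrite size_rot !size_csums size_rot.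
rewrite size_csums size_rot => i lt_i_s.
have lt_i1_s : (i.+1 %% size s < size s)%N by rewrite ltn_mod; lia.
by rewrite nth_rot1 ?size_csums // !nth_csums ?size_rot // !nth_rot1 ?size_rot.
Qed.

Lemma size_op2 a s : size (op2 a s) = size s.
Proof. by rewrite size_map size_iota. Qed.

Lemma nth_op2 a s i : (i < size s)%N ->
  (op2 a s)`_i = s`_i + (-1) ^+ i.+1 * (s`_0 - a).
Proof. by move=> lt_i_s; rewrite (nth_map 0%N) ?size_iota // nth_iota. Qed.

(* The alternating corrections of Op2 cancel in consecutive sums, also across
   the wrap-around because the length is even. *)
Lemma csums_op2 a s : ~~ odd (size s) -> csums (op2 a s) = csums s.
Proof.
move=> even_s; apply: (@eq_from_nth _ 0); first by rewrite !size_csums size_op2.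
rewrite size_csums size_op2 => i lt_i_s.
have lt_i1_s : (i.+1 %% size s < size s)%N by rewrite ltn_mod; lia.
have odd_i1 : odd (i.+1 %% size s) = ~~ odd i by rewrite odd_mod ?(negbTE even_s).
rewrite nth_csums ?size_op2 // !nth_op2 // nth_csums //.
rewrite -signr_odd -[(-1) ^+ (_ %% _).+1]signr_odd /= odd_i1 negbK.
by case: (odd i) => /=; ring.
Qed.

Lemma size_op3 a s : size (op3 a s) = size s.
Proof. by rewrite size_map size_iota. Qed.

Lemma nth_op3 a s i : (i < size s)%N -> (op3 a s)`_i = s`_0 - s`_i + a.
Proof. by move=> lt_i_s; rewrite (nth_map 0%N) ?size_iota // nth_iota. Qed.

Lemma csums_op3 a s :
  csums (op3 a s) = [seq (s`_0 + a) *+ 2 - c | c <- csums s].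
Proof.
apply: (@eq_from_nth _ 0); first by rewrite size_csums size_op3 size_map size_csums.
rewrite size_csums size_op3 => i lt_i_s.
have lt_i1_s : (i.+1 %% size s < size s)%N by rewrite ltn_mod; lia.
rewrite nth_csums ?size_op3 // !nth_op3 // (nth_map 0) ?size_csums //.
by rewrite nth_csums //; ring.
Qed.

Lemma csums_cons3 (x0 x1 x2 : 'Z_p) s :
  csums [:: x0, x1, x2 & s] =
  x0 + x1 :: x1 + x2 :: drop 2 (csums [:: x0, x1, x2 & s]).
Proof. by rewrite /csums rot1_cons /= drop0. Qed.

Lemma csums_op4 (x0 x1 x2 : 'Z_p) s :
  csums (op4 [:: x0, x1, x2 & s]) =
  x1 + x2 :: (x1 + x2) *+ 2 - (x0 + x1) :: drop 2 (csums [:: x0, x1, x2 & s]).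
Proof. by rewrite /csums /op4 /= drop0; congr [:: _, _ & _]; ring. Qed.

End ConsecutiveSums.

Lemma val_ZpD p (x y : 'Z_p) : (1 < p)%N -> val (x + y) = ((val x + val y) %% p)%N.
Proof. by move=> p_gt1; rewrite /=; congr (_ %% _)%N; exact: Zp_cast. Qed.

Lemma odd_valZpD q (x y : 'Z_q) : (1 < q)%N -> ~~ odd q ->
  odd (val (x + y)) = odd (val x) (+) odd (val y).
Proof. by move=> q_gt1 q_even; rewrite val_ZpD // odd_mod ?oddD ?(negbTE q_even). Qed.

Section ZpDivisibility.

Variables p k : nat.
Hypotheses (p_gt1 : (1 < p)%N) (k_dvd_p : (k %| p)%N).
Implicit Types x y : 'Z_p.

Lemma dvdn_valZpDr x y : (k %| val x)%N -> (k %| val (x + y)%R)%N = (k %| val y)%N.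
Proof.
have dvdn_modp m : (k %| m %% p)%N = (k %| m)%N by rewrite /dvdn modn_dvdm.
by move=> k_dvd_x; rewrite val_ZpD // dvdn_modp dvdn_addr.
Qed.

Lemma dvdn_valZpN x : (k %| val (- x)%R)%N = (k %| val x)%N.
Proof.
apply/idP/idP => [k_dvd_Nx | k_dvd_x].
  by rewrite -(dvdn_valZpDr x k_dvd_Nx) addNr dvdn0.
by rewrite -(dvdn_valZpDr (- x) k_dvd_x) addrN dvdn0.
Qed.

Lemma dvdn_valZpB x y :
  (k %| val x)%N -> (k %| val y)%N -> (k %| val (x - y)%R)%N.
Proof. by move=> k_dvd_x k_dvd_y; rewrite dvdn_valZpDr // dvdn_valZpN. Qed.

Lemma dvdn_valZpD x y :
  (k %| val x)%N -> (k %| val y)%N -> (k %| val (x + y)%R)%N.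
Proof. by move=> k_dvd_x; rewrite dvdn_valZpDr. Qed.

Lemma congr_modE x y : congr_mod k x y = (k %| val (x - y)%R)%N.
Proof.
rewrite /congr_mod -{1}(subrK y x) [val (x - y + y)]val_ZpD // modn_dvdm //.
by rewrite -[X in _ == X %[mod k]]add0n eqn_modDr mod0n.
Qed.

End ZpDivisibility.

(* Differences only matter up to sign: [absZp x] is a canonical representative
   of {x, -x}. *)
Definition absZp p (x : 'Z_p) : 'Z_p := Order.min x (- x).

Lemma absZpN p (x : 'Z_p) : absZp (- x) = absZp x.
Proof. by rewrite /absZp opprK Order.TotalTheory.minC. Qed.

Lemma absZp_cases p (x : 'Z_p) : absZp x = x \/ absZp x = - x.
Proof. by rewrite /absZp Order.POrderTheory.minEle; case: ifP; [left | right]. Qed.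

Lemma map_absZpN p (ds : seq 'Z_p) :
  [seq absZp d | d <- [seq - d | d <- ds]] = [seq absZp d | d <- ds].
Proof. by rewrite -map_comp; apply: eq_map => d /=; rewrite absZpN. Qed.

Lemma dvdn_valZp_abs p k (x : 'Z_p) : (1 < p)%N -> (k %| p)%N ->
  (k %| val (absZp x))%N = (k %| val x)%N.
Proof. by move=> p_gt1 k_dvd_p; case: (absZp_cases x) => ->; rewrite ?dvdn_valZpN. Qed.

Section CongruentSums.

Variable p : nat.
Implicit Types (s t cs : seq 'Z_p).

Lemma eq_tau_p s t :
  (forall k, (k %| p)%N ->
     all (fun c => congr_mod k c (csums s)`_0) (csums s) =
     all (fun c => congr_mod k c (csums t)`_0) (csums t)) ->
  tau_p s = tau_p t.
Proof.
move=> eq_congr; apply: eq_bigl => k.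
by case: (boolP (k %| p)%N) => k_dvd_p; rewrite ?andbF ?eq_congr.
Qed.

Lemma tau_p_all_congr s : (0 < tau_p s)%N ->
  all (fun c => congr_mod (tau_p s) c (csums s)`_0) (csums s).
Proof.
move=> tau_gt0.
by have [k /and3P[_ _ congr_k] <-] := bigmax_attained (erefl (tau_p s)) tau_gt0.
Qed.

Lemma all_congr_mod_ref k (r r' : 'Z_p) cs : r \in cs -> r' \in cs ->
  all (fun c => congr_mod k c r) cs = all (fun c => congr_mod k c r') cs.
Proof.
suff ref1 r1 r2 : r2 \in cs ->
    all (fun c => congr_mod k c r1) cs -> all (fun c => congr_mod k c r2) cs.
  by move=> r_cs r'_cs; apply/idP/idP; apply: ref1.
move=> r2_cs /allP congr_r1; apply/allP => c c_cs.
by rewrite /congr_mod (eqP (congr_r1 c c_cs)) (eqP (congr_r1 r2 r2_cs)).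
Qed.

Definition diffs (r : 'Z_p) cs := [seq c - r | c <- cs].

Lemma size_diffs r cs : size (diffs r cs) = size cs.
Proof. exact: size_map. Qed.

Lemma nth_diffs r cs i : (i < size cs)%N -> (diffs r cs)`_i = cs`_i - r.
Proof. by move=> lt_i_cs; rewrite (nth_map 0). Qed.

Lemma diffs_rsub (K r : 'Z_p) cs :
  diffs (K - r) [seq K - c | c <- cs] = [seq - d | d <- diffs r cs].
Proof. by rewrite /diffs -!map_comp; apply: eq_map => c /=; ring. Qed.

Lemma all_congr_mod_diffs k (r : 'Z_p) cs : (1 < p)%N -> (k %| p)%N -> r \in cs ->
  all (fun c => congr_mod k c cs`_0) cs = all (fun d => k %| val d)%N (diffs r cs).
Proof.
move=> p_gt1 k_dvd_p r_cs; have cs0 : cs`_0 \in cs by rewrite mem_nth //; case: cs r_cs.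
rewrite (all_congr_mod_ref _ cs0 r_cs) all_map.
by apply: eq_all => c; rewrite /= congr_modE.
Qed.

End CongruentSums.

Section FixedTau.

Variables p tau : nat.
Hypotheses (p_gt1 : (1 < p)%N) (tau_gt0 : (0 < tau)%N) (tau_dvd_p : (tau %| p)%N).
Hypothesis quot_even : ~~ odd (p %/ tau).
Implicit Types (x y : 'Z_p) (s cs : seq 'Z_p).

Definition odd_quot x := odd (val x %/ tau).

Lemma quot_gt1 : (1 < p %/ tau)%N.
Proof.
have : (0 < p %/ tau)%N by rewrite divn_gt0 // dvdn_leq // ltnW.
by move: quot_even; case: (p %/ tau)%N => [|[|]].
Qed.

Lemma odd_val_divtau x : odd (val (divtau tau x)) = odd_quot x.
Proof. by rewrite /= (Zp_cast quot_gt1) odd_mod ?(negbTE quot_even). Qed.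

Lemma odd_quotD x y : (tau %| val x)%N -> odd_quot (x + y) = odd_quot x (+) odd_quot y.
Proof.
move=> tau_dvd_x; rewrite /odd_quot val_ZpD // divn_modl //.
by rewrite odd_mod ?(negbTE quot_even) // divnDl // oddD.
Qed.

Lemma odd_quotN x : (tau %| val x)%N -> odd_quot (- x) = odd_quot x.
Proof.
move=> tau_dvd_x; have := odd_quotD (- x) tau_dvd_x; rewrite addrN /odd_quot div0n /=.
by case: (odd _); case: (odd _).
Qed.

Lemma odd_quot_abs x : (tau %| val x)%N -> odd_quot (absZp x) = odd_quot x.
Proof. by move=> tau_dvd_x; case: (absZp_cases x) => ->; rewrite ?odd_quotN. Qed.

(* Each a_i differs from a_1 or a_2 (same parity of index) by a multiple of
   tau, since a_{i+2} - a_i = c_{i+1} - c_i. *)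
Lemma dvdn_reduce_diff s : all (fun c => congr_mod tau c (csums s)`_0) (csums s) ->
  forall i, (i < size s)%N -> (tau %| val (s`_i - (if odd i then s`_1 else s`_0))%R)%N.
Proof.
move=> /(all_nthP 0) congr_s.
have dvd_cs i : (i < size s)%N -> (tau %| val ((csums s)`_i - (csums s)`_0)%R)%N.
  by move=> lt_i_s; rewrite -congr_modE // congr_s // size_csums.
elim/ltn_ind => -[|[|i]] IH lt_i_s; rewrite ?subrr ?dvdn0 //.
have -> : s`_i.+2 - (if odd i.+2 then s`_1 else s`_0) =
    ((csums s)`_i.+1 - (csums s)`_0) - ((csums s)`_i - (csums s)`_0) +
    (s`_i - (if odd i then s`_1 else s`_0)).
  by rewrite /= negbK !nth_csums ?modn_small //; try lia; ring.
apply: dvdn_valZpD => //; last by apply: IH; lia.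
by apply: dvdn_valZpB => //; apply: dvd_cs; lia.
Qed.

Lemma mu_q_reduce s : ~~ odd (size s) ->
  all (fun c => congr_mod tau c (csums s)`_0) (csums s) ->
  mu_q (reduce tau s) = balance [seq odd_quot d | d <- diffs (csums s)`_0 (csums s)].
Proof.
move=> even_s congr_s; rewrite mu_q_balance; congr balance.
have size_reduce : size (reduce tau s) = size s by rewrite size_map size_iota.
have nth_reduce j : (j < size s)%N ->
    (reduce tau s)`_j = divtau tau (s`_j - (if odd j then s`_1 else s`_0)).
  by move=> lt_j_s; rewrite (nth_map 0%N) ?size_iota // nth_iota.
apply: (@eq_from_nth _ false).
  by rewrite [LHS]size_map [RHS]size_map size_diffs !size_csums size_reduce.
rewrite size_map size_csums size_reduce => i lt_i_s.
have s_gt1 : (1 < size s)%N by move: even_s lt_i_s; case: (size s) => [|[|]].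
have lt_i1_s : (i.+1 %% size s < size s)%N by rewrite ltn_mod; lia.
have odd_i1 : odd (i.+1 %% size s) = ~~ odd i by rewrite odd_mod ?(negbTE even_s).
rewrite [LHS](nth_map 0) ?size_csums ?size_reduce //.
rewrite [RHS](nth_map 0) ?size_diffs ?size_csums //.
rewrite nth_diffs ?size_csums // nth_csums ?size_reduce // odd_valZpD ?quot_gt1 //.
rewrite !nth_reduce // !odd_val_divtau -odd_quotD; last exact: dvdn_reduce_diff.
rewrite !nth_csums ?(ltnW s_gt1) // (@modn_small 1%N) // odd_i1.
by congr odd_quot; case: (odd i) => /=; ring.
Qed.

(* Moving the reference from cs`_0 to r adds (r - cs`_0)/tau to every
   quotient, so all parities flip together or not at all. *)
Lemma absz_balance_diffs cs r : all (fun c => congr_mod tau c cs`_0) cs -> r \in cs ->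
  absz (balance [seq odd_quot d | d <- diffs cs`_0 cs]) =
  absz (balance [seq odd_quot d | d <- [seq absZp d | d <- diffs r cs]]).
Proof.
move=> congr_cs r_cs.
have /allP dvd_r : all (fun d => tau %| val d)%N (diffs r cs).
  by rewrite -all_congr_mod_diffs.
have -> : [seq odd_quot d | d <- diffs cs`_0 cs] =
    [seq b (+) odd_quot (r - cs`_0) | b <- [seq odd_quot d | d <- diffs r cs]].
  rewrite /diffs -!map_comp; apply/eq_in_map => c c_cs /=.
  by rewrite -odd_quotD ?subrKA //; apply: dvd_r; exact: map_f.
rewrite absz_balance_addb -map_comp; congr (absz (balance _)).
by apply/eq_in_map => d /dvd_r tau_dvd_d /=; rewrite odd_quot_abs.
Qed.

Lemma mu_ptau_eq_abs_diffs s t r r' :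
  ~~ odd (size s) -> ~~ odd (size t) -> r \in csums s -> r' \in csums t ->
  perm_eq [seq absZp d | d <- diffs r (csums s)]
          [seq absZp d | d <- diffs r' (csums t)] ->
  mu_ptau tau s = mu_ptau tau t.
Proof.
move=> even_s even_t r_s r'_t eq_abs.
have all_dvd_abs k r0 cs : (k %| p)%N -> all (fun d => k %| val d)%N (diffs r0 cs) =
    all (fun d => k %| val d)%N [seq absZp d | d <- diffs r0 cs].
  by move=> k_dvd_p; rewrite [RHS]all_map; apply: eq_all => d; rewrite /= dvdn_valZp_abs.
have eq_congr k : (k %| p)%N ->
    all (fun c => congr_mod k c (csums s)`_0) (csums s) =
    all (fun c => congr_mod k c (csums t)`_0) (csums t).
  move=> k_dvd_p; rewrite (all_congr_mod_diffs p_gt1 k_dvd_p r_s).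
  by rewrite (all_congr_mod_diffs p_gt1 k_dvd_p r'_t) !all_dvd_abs // (perm_all _ eq_abs).
rewrite /mu_ptau (eq_tau_p eq_congr); case: eqP => // tau_t.
have := @tau_p_all_congr p t; rewrite tau_t => /(_ tau_gt0) congr_t.
have congr_s : all (fun c => congr_mod tau c (csums s)`_0) (csums s) by rewrite eq_congr.
rewrite !mu_q_reduce // (absz_balance_diffs congr_s r_s).
rewrite (absz_balance_diffs congr_t r'_t).
by rewrite (balance_perm (perm_map odd_quot eq_abs)).
Qed.

Lemma mu_ptau_step s t : step s t -> mu_ptau tau s = mu_ptau tau t.
Proof.
case=> /andP[s_gt0 even_s].
have cs0 : (csums s)`_0 \in csums s by rewrite mem_nth ?size_csums.
case=> [-> | [a ->] | [a ->] | [s_gt3 ->]].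
- apply: (mu_ptau_eq_abs_diffs (r := (csums s)`_0) (r' := (csums s)`_0)) => //.
  + by rewrite size_rot.
  + by rewrite csums_op1 mem_rot.
  + by rewrite csums_op1 /diffs !map_rot perm_sym perm_rot.
- by apply: (mu_ptau_eq_abs_diffs (r := (csums s)`_0) (r' := (csums s)`_0));
    rewrite ?size_op2 ?csums_op2.
- apply: (mu_ptau_eq_abs_diffs (r := (csums s)`_0)
                               (r' := (s`_0 + a) *+ 2 - (csums s)`_0)) => //.
  + by rewrite size_op3.
  + by rewrite csums_op3; apply: map_f.
  + by rewrite csums_op3 diffs_rsub map_absZpN.
move: s_gt0 even_s s_gt3 cs0; case: s => [|x0 [|x1 [|x2 s]]] // _ even_s _ _.
have r_s : x1 + x2 \in csums [:: x0, x1, x2 & s] by rewrite csums_cons3 !inE eqxx orbT.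
apply: (mu_ptau_eq_abs_diffs (r := x1 + x2) (r' := x1 + x2)) => //.
  by rewrite csums_op4 mem_head.
rewrite csums_op4 {1}csums_cons3 /diffs /= subrr.
rewrite (_ : (x1 + x2) *+ 2 - (x0 + x1) - (x1 + x2) = - (x0 + x1 - (x1 + x2)));
  last by ring.
by rewrite absZpN (perm_catCA [:: _] [:: _]).
Qed.

End FixedTau.

Theorem mainTheorem4 (p tau : nat) (a b : seq 'Z_p) :
  (2 <= p)%N -> ~~ odd p ->
  (1 <= tau <= p)%N -> ~~ odd tau -> (tau %| p)%N -> ~~ odd (p %/ tau) ->
  inU a -> inU b -> equivalent a b ->
  mu_ptau tau a = mu_ptau tau b.
Proof.
move=> p_gt1 _ /andP[tau_gt0 _] _ tau_dvd_p quot_even _ _ [_ [_ equiv_ab]].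
elim: equiv_ab => [s t st | // | s t _ IH | s t u _ IH1 _ IH2].
- exact: mu_ptau_step st.
- by rewrite IH.
- by rewrite IH1 IH2.
Qed.
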